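(* Let $n\ge2$, and let $g_1(s),\dots,g_n(s)$, $f(s)$ be rational proper transfer functions. Suppose each $g_i$ is output strictly passive, i.e. there is $\epsilon>0$ with $\mathrm{Re}(g_i(s))\ge\epsilon|g_i(s)|^2$ for all $\mathrm{Re}(s)>0$ and all $i$, and $f$ is positive real, i.e. $\mathrm{Re}(f(s))\ge0$ for all $\mathrm{Re}(s)>0$. Then there exists $\gamma>0$ such that for every positive semidefinite matrix $L$ (real symmetric $n\times n$), $$\|\bar g\|_{\mathcal{H}_\infty}\le\gamma\quad\text{and}\quad\|T\|_{\mathcal{H}_\infty}\le\gamma,$$ where $T(s)=(I_n+\mathrm{diag}\{g_i(s)\}f(s)L)^{-1}\mathrm{diag}\{g_i(s)\}$ and $\bar g(s)=\big(\frac1n\sum_{i=1}^n g_i^{-1}(s)\big)^{-1}$.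
   Context: $\|H\|_{\mathcal{H}_\infty}=\sup_{\mathrm{Re}(s)>0}\|H(s)\|$ with $\|\cdot\|$ the spectral norm. *)

From HB Require Import structures.
From mathcomp Require Import all_boot all_order all_algebra.
From mathcomp Require Import all_classical all_reals.
From mathcomp Require Import complex.
Set Implicit Arguments. Unset Strict Implicit. Unset Printing Implicit Defensive.
Import Order.TTheory GRing.Theory Num.Theory.
Local Open Scope ring_scope.
Local Open Scope classical_set_scope.

Definition cmod (R : realType) (z : R[i]) : R :=
  Num.sqrt (complex.Re z ^+ 2 + complex.Im z ^+ 2).

Definition vnorm2 (R : realType) (n : nat) (v : 'cV[R[i]]_n) : R :=
  Num.sqrt (\sum_(i < n) cmod (v i 0) ^+ 2).

Definition spec_norm (R : realType) (m n : nat) (M : 'M[R[i]]_(m, n)) : R :=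
  sup [set vnorm2 (M *m v) | v in [set v : 'cV[R[i]]_n | vnorm2 v = 1]].

(* A rational transfer function with real coefficients, given by a
   numerator/denominator pair  (p, q)  representing  p(s)/q(s). *)
Definition tf (R : realType) := ({poly R} * {poly R})%type.

Definition rational_proper (R : realType) (g : tf R) : Prop :=
  [/\ g.2 != 0, coprimep g.1 g.2 & (size g.1 <= size g.2)%N].

Definition tf_den (R : realType) (g : tf R) (s : R[i]) : R[i] :=
  (map_poly (real_complex R) g.2).[s].
Definition tf_eval (R : realType) (g : tf R) (s : R[i]) : R[i] :=
  (map_poly (real_complex R) g.1).[s] / tf_den g s.

Definition tf_defined (R : realType) (g : tf R) (s : R[i]) : Prop :=
  tf_den g s != 0.

Definition OSP_with (R : realType) (eps : R) (g : tf R) : Prop :=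
  forall s : R[i], 0 < complex.Re s ->
    tf_defined g s /\ eps * cmod (tf_eval g s) ^+ 2 <= complex.Re (tf_eval g s).

Definition positive_real (R : realType) (f : tf R) : Prop :=
  forall s : R[i], 0 < complex.Re s -> tf_defined f s /\ 0 <= complex.Re (tf_eval f s).

Definition psd (R : realType) (n : nat) (L : 'M[R]_n) : Prop :=
  L^T = L /\ forall x : 'cV[R]_n, 0 <= (x^T *m L *m x) 0 0.

Definition Gdiag (R : realType) (n : nat) (g : 'I_n -> tf R) (s : R[i])
  : 'M[R[i]]_n := diag_mx (\row_i tf_eval (g i) s).

Definition return_diff (R : realType) (n : nat) (g : 'I_n -> tf R) (f : tf R)
  (L : 'M[R]_n) (s : R[i]) : 'M[R[i]]_n :=
  1%:M + Gdiag g s *m ((tf_eval f s) *: map_mx (real_complex R) L).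

Definition Tcl (R : realType) (n : nat) (g : 'I_n -> tf R) (f : tf R)
  (L : 'M[R]_n) (s : R[i]) : 'M[R[i]]_n :=
  invmx (return_diff g f L s) *m Gdiag g s.

Definition gbar (R : realType) (n : nat) (g : 'I_n -> tf R) (s : R[i]) : R[i] :=
  ((n%:R)^-1 * \sum_(i < n) (tf_eval (g i) s)^-1)^-1.

From HB Require Import structures.
From mathcomp Require Import all_boot all_order all_algebra.
From mathcomp Require Import all_classical all_reals.
From mathcomp Require Import complex ring lra.
Set Implicit Arguments. Unset Strict Implicit. Unset Printing Implicit Defensive.
Import Order.TTheory GRing.Theory Num.Theory.
Local Open Scope ring_scope.

(* Let <x, y> = Re (x * conj y) be the real inner product on C and C^n.
   If T(s) v = u then (I + G F L) u = G v, i.e. u_i = g_i (v_i - F (L u)_i)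
   with G = diag{g_i(s)} and F = f(s).  Output strict passivity of g_i gives
   eps |u_i|^2 <= <v_i - F (L u)_i, u_i>, and since Re F >= 0 and L is real
   symmetric positive semidefinite, <F L u, u> = Re F (a'La + b'Lb) >= 0 for
   u = a + i b.  Hence eps |u|^2 <= <v, u>, and Young's inequality turns this
   into eps |u| <= |v|: the return difference is injective, hence invertible,
   and ||T(s)|| <= 1/eps whatever L is.  For gbar, Re (1/g_i) >= eps, so the
   mean of the 1/g_i has real part, hence modulus, at least eps. *)

Local Notation Re := (@complex.Re _).
Local Notation Im := (@complex.Im _).

Section ComplexInnerProduct.
Variable R : realType.
Implicit Types (eps c : R) (x y z : R[i]).

Definition rdot x y : R := Re x * Re y + Im x * Im y.

Lemma cReM x y : Re (x * y) = Re x * Re y - Im x * Im y.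
Proof. by case: x; case: y. Qed.

Lemma cImM x y : Im (x * y) = Re x * Im y + Im x * Re y.
Proof. by case: x => a b; case: y => c d /=. Qed.

Lemma cRe_realM c z : Re (real_complex R c * z) = c * Re z.
Proof. by case: z => a b /=; ring. Qed.

Lemma cIm_realM c z : Im (real_complex R c * z) = c * Im z.
Proof. by case: z => a b /=; ring. Qed.

Lemma cmod_normc z : cmod z = ComplexField.Normc.normc z.
Proof. by case: z. Qed.

Lemma cmod_sqr z : cmod z ^+ 2 = rdot z z.
Proof. by rewrite /cmod sqr_sqrtr ?addr_ge0 ?sqr_ge0 // /rdot !expr2. Qed.

Lemma cmod_eq0 z : (cmod z == 0) = (z == 0).
Proof.
rewrite cmod_normc; apply/eqP/eqP => [/ComplexField.Normc.eq0_normc //|->].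
exact: ComplexField.Normc.normc0.
Qed.

Lemma cmodM x y : cmod (x * y) = cmod x * cmod y.
Proof. by rewrite !cmod_normc ComplexField.Normc.normcM. Qed.

Lemma cmodV z : cmod z^-1 = (cmod z)^-1.
Proof. by rewrite !cmod_normc ComplexField.Normc.normcV. Qed.

Lemma cRe_le_cmod z : Re z <= cmod z.
Proof.
apply: le_trans (ler_norm _) _; rewrite -sqrtr_sqr.
by apply: ler_wsqrtr; rewrite lerDl sqr_ge0.
Qed.

Lemma cRe_inv z : Re z^-1 = Re z / cmod z ^+ 2.
Proof. by rewrite cmod_sqr; case: z => a b; rewrite /rdot /= !expr2. Qed.

Lemma rdot_mulr y z : rdot y (z * y) = Re z * cmod y ^+ 2.
Proof. by rewrite cmod_sqr; case: z => a b; case: y => c d; rewrite /rdot /=; ring. Qed.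

Lemma rdotBl x y z : rdot (x - y) z = rdot x z - rdot y z.
Proof. by rewrite /rdot !raddfB /=; ring. Qed.

Lemma rdot_young eps x y : 2 * eps * rdot x y <= eps ^+ 2 * rdot y y + rdot x x.
Proof.
have := sqr_ge0 (eps * Re y - Re x); have := sqr_ge0 (eps * Im y - Im x).
rewrite /rdot; nra.
Qed.

Lemma osp_rdot eps z y :
  eps * cmod z ^+ 2 <= Re z -> eps * cmod (z * y) ^+ 2 <= rdot y (z * y).
Proof.
by move=> osp_z; rewrite cmodM exprMn mulrA rdot_mulr ler_wpM2r ?sqr_ge0.
Qed.

Lemma osp_Re_inv eps z :
  z != 0 -> eps * cmod z ^+ 2 <= Re z -> eps <= Re z^-1.
Proof.
rewrite -cmod_eq0 => z_neq0; rewrite cRe_inv ler_pdivlMr //.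
by rewrite exprn_gt0 // lt_neqAle eq_sym z_neq0 sqrtr_ge0.
Qed.

Lemma cmodV_le eps z : 0 < eps -> eps <= Re z -> cmod z^-1 <= eps^-1.
Proof.
move=> eps_gt0 eps_le; have eps_le_cmod := le_trans eps_le (cRe_le_cmod z).
by rewrite cmodV lef_pV2 ?posrE // (lt_le_trans eps_gt0).
Qed.

Lemma cRe_mean_ge eps n (w : 'I_n -> R[i]) :
  (0 < n)%N -> (forall i, eps <= Re (w i)) ->
  eps <= Re ((n%:R)^-1 * \sum_i w i).
Proof.
move=> n_gt0 w_ge; rewrite -(rmorph_nat (real_complex R)) -fmorphV cRe_realM.
rewrite raddf_sum ler_pdivlMl ?ltr0n //.
have -> : n%:R * eps = \sum_(i < n) eps by rewrite sumr_const card_ord mulr_natl.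
by apply: ler_sum => i _; apply: w_ge.
Qed.

End ComplexInnerProduct.

Lemma cmod_gbar_le (R : realType) (n : nat) (g : 'I_n -> tf R) (s : R[i]) (eps : R) :
  (0 < n)%N -> 0 < eps ->
  (forall i, eps * cmod (tf_eval (g i) s) ^+ 2 <= Re (tf_eval (g i) s)) ->
  (forall i, tf_eval (g i) s != 0) -> cmod (gbar g s) <= eps^-1.
Proof.
move=> n_gt0 eps_gt0 osp_g g_neq0; apply: cmodV_le => //.
by apply: cRe_mean_ge => // i; apply: osp_Re_inv.
Qed.

Lemma ker0_unitmx (F : fieldType) (n : nat) (A : 'M[F]_n) :
  (forall w : 'cV_n, A *m w = 0 -> w = 0) -> A \in unitmx.
Proof.
move=> kerA; rewrite unitmxE unitfE -det_tr; apply/negP => /det0P[v v_neq0 vA0].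
have : v^T = 0 by apply: kerA; rewrite -[A]trmxK -trmx_mul vA0 trmx0.
by move/(congr1 trmx); rewrite trmxK trmx0; apply/eqP.
Qed.

Section ComplexVectors.
Variables (R : realType) (n : nat).
Implicit Types u v w : 'cV[R[i]]_n.

Definition vdot u v : R := \sum_i rdot (u i 0) (v i 0).

Lemma vdotBl u v w : vdot (u - v) w = vdot u w - vdot v w.
Proof. by rewrite /vdot -sumrB; apply: eq_bigr => i _; rewrite !mxE rdotBl. Qed.

Lemma vnorm2_ge0 u : 0 <= vnorm2 u.
Proof. exact: sqrtr_ge0. Qed.

Lemma vnorm2_sqr u : vnorm2 u ^+ 2 = vdot u u.
Proof.
rewrite /vnorm2 sqr_sqrtr; last by apply: sumr_ge0 => i _; apply: sqr_ge0.
by apply: eq_bigr => i _; apply: cmod_sqr.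
Qed.

Lemma vnorm2_0 : vnorm2 (0 : 'cV[R[i]]_n) = 0.
Proof.
rewrite /vnorm2 big1 ?sqrtr0 // => i _.
by rewrite mxE; apply/eqP; rewrite sqrf_eq0 cmod_eq0.
Qed.

Lemma vnorm2_eq0 u : vnorm2 u = 0 -> u = 0.
Proof.
move=> /eqP; rewrite sqrtr_eq0 => sum_le0.
have sum0 : \sum_i cmod (u i 0) ^+ 2 = 0.
  by apply/le_anti; rewrite sum_le0 sumr_ge0 // => i _; apply: sqr_ge0.
apply/matrixP => i j; rewrite (ord1 j) mxE; apply/eqP.
by rewrite -cmod_eq0 -sqrf_eq0; apply/eqP/(psumr_eq0P _ sum0) => // k _; apply: sqr_ge0.
Qed.

Lemma vdot_young eps u v :
  2 * eps * vdot v u <= eps ^+ 2 * vnorm2 u ^+ 2 + vnorm2 v ^+ 2.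
Proof.
rewrite !vnorm2_sqr /vdot !mulr_sumr -big_split /=.
by apply: ler_sum => i _; apply: rdot_young.
Qed.

Lemma spec_norm_le m (M : 'M[R[i]]_(m, n)) c :
  0 <= c -> (forall v, vnorm2 (M *m v) <= c * vnorm2 v) -> spec_norm M <= c.
Proof.
move=> c_ge0 Mc; rewrite /spec_norm; set E := (X in sup X).
have [/eqP->|/set0P E_neq0] := boolP (E == set0); first by rewrite sup0.
by apply: ge_sup => // _ [v v1 <-]; rewrite -[c]mulr1 -v1.
Qed.

Lemma map_Re_mulmx m (A : 'M[R]_(m, n)) (u : 'cV[R[i]]_n) :
  map_mx Re (map_mx (real_complex R) A *m u) = A *m map_mx Re u.
Proof.
apply/matrixP => i j; rewrite !mxE raddf_sum.
by apply: eq_bigr => k _; rewrite !mxE; apply: cRe_realM.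
Qed.

Lemma map_Im_mulmx m (A : 'M[R]_(m, n)) (u : 'cV[R[i]]_n) :
  map_mx Im (map_mx (real_complex R) A *m u) = A *m map_mx Im u.
Proof.
apply/matrixP => i j; rewrite !mxE raddf_sum.
by apply: eq_bigr => k _; rewrite !mxE; apply: cIm_realM.
Qed.

End ComplexVectors.

Section PsdForm.
Variables (R : realType) (n : nat) (L : 'M[R]_n).
Hypothesis psdL : psd L.

Definition qform (x y : 'cV[R]_n) : R := (x^T *m L *m y) 0 0.

Lemma qformE x y : qform x y = \sum_i x i 0 * (L *m y) i 0.
Proof. by rewrite /qform -mulmxA mxE; apply: eq_bigr => i _; rewrite mxE. Qed.

Lemma qformC x y : qform x y = qform y x.
Proof.
have [L_sym _] := psdL.
transitivity ((x^T *m L *m y)^T 0 0); first by rewrite mxE.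
by rewrite !trmx_mul trmxK L_sym mulmxA.
Qed.

Lemma qform_ge0 x : 0 <= qform x x.
Proof. by case: psdL => _; apply. Qed.

Lemma psd_vdot_ge0 (F : R[i]) (u : 'cV[R[i]]_n) :
  0 <= Re F -> 0 <= vdot (F *: (map_mx (real_complex R) L *m u)) u.
Proof.
move=> ReF_ge0; set w := _ *m u; set a := map_mx Re u; set b := map_mx Im u.
have Rew i : Re (w i 0) = (L *m a) i 0 by rewrite /a -map_Re_mulmx !mxE.
have Imw i : Im (w i 0) = (L *m b) i 0 by rewrite /b -map_Im_mulmx !mxE.
have aE i : a i 0 = Re (u i 0) by rewrite mxE.
have bE i : b i 0 = Im (u i 0) by rewrite mxE.
have -> : vdot (F *: w) u =
    Re F * (qform a a + qform b b) + Im F * (qform b a - qform a b).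
  rewrite !qformE -sumrB -!big_split !mulr_sumr -big_split /=.
  apply: eq_bigr => i _.
  by rewrite /rdot [(F *: w) i 0]mxE cReM cImM Rew Imw !aE !bE; ring.
by rewrite [qform b a]qformC subrr mulr0 addr0 mulr_ge0 ?addr_ge0 ?qform_ge0.
Qed.

End PsdForm.

Section ReturnDifference.
Variables (R : realType) (n : nat) (g : 'I_n -> tf R) (f : tf R).
Variables (L : 'M[R]_n) (s : R[i]) (eps : R).
Hypotheses (psdL : psd L) (eps_gt0 : 0 < eps).
Hypothesis osp_g : forall i, eps * cmod (tf_eval (g i) s) ^+ 2 <= Re (tf_eval (g i) s).
Hypothesis pr_f : 0 <= Re (tf_eval f s).

Lemma return_diff_vdot u v :
  return_diff g f L s *m u = Gdiag g s *m v -> eps * vnorm2 u ^+ 2 <= vdot v u.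
Proof.
set F := tf_eval f s; set Lu := map_mx (real_complex R) L *m u.
rewrite /return_diff mulmxDl mul1mx => uv.
have uE : u = Gdiag g s *m (v - F *: Lu).
  by rewrite mulmxBr /Lu scalemxAl mulmxA -uv addrK.
have uiE i : u i 0 = tf_eval (g i) s * (v - F *: Lu) i 0.
  by rewrite {1}uE /Gdiag mul_diag_mx !mxE.
apply: (@le_trans _ _ (vdot (v - F *: Lu) u)).
  rewrite vnorm2_sqr /vdot mulr_sumr; apply: ler_sum => i _.
  by rewrite -cmod_sqr uiE; apply: osp_rdot.
by rewrite vdotBl lerBlDr lerDl; apply: psd_vdot_ge0.
Qed.

Lemma return_diff_coercive u v :
  return_diff g f L s *m u = Gdiag g s *m v -> eps * vnorm2 u <= vnorm2 v.
Proof.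
move=> /return_diff_vdot uv; have young := vdot_young eps u v.
have : (eps * vnorm2 u) ^+ 2 <= vnorm2 v ^+ 2.
  have := ler_wpM2l (ltW eps_gt0) uv; rewrite exprMn; lra.
have eps_u_ge0 : 0 <= eps * vnorm2 u by rewrite mulr_ge0 ?vnorm2_ge0 ?ltW.
by rewrite ler_sqr ?nnegrE ?vnorm2_ge0.
Qed.

Lemma return_diff_unitmx : return_diff g f L s \in unitmx.
Proof.
apply: ker0_unitmx => w w0; apply: vnorm2_eq0; apply/le_anti.
rewrite vnorm2_ge0 andbT -(pmulr_rle0 _ eps_gt0) -(vnorm2_0 R n).
by apply: return_diff_coercive; rewrite mulmx0.
Qed.

Lemma spec_norm_Tcl_le : spec_norm (Tcl g f L s) <= eps^-1.
Proof.
apply: spec_norm_le => [|v]; first by rewrite invr_ge0 ltW.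
rewrite ler_pdivlMl //; apply: return_diff_coercive.
by rewrite /Tcl !mulmxA mulmxV ?return_diff_unitmx // mul1mx.
Qed.

End ReturnDifference.

Theorem theorem4 (R : realType) (n : nat) (g : 'I_n -> tf R) (f : tf R) :
  (2 <= n)%N ->
  (forall i, rational_proper (g i)) -> rational_proper f ->
  (exists2 eps : R, 0 < eps & forall i, OSP_with eps (g i)) ->
  positive_real f ->
  exists2 gamma : R, 0 < gamma &
    forall L : 'M[R]_n, psd L ->
      (forall s : R[i], 0 < complex.Re s ->
         (forall i, tf_eval (g i) s != 0) -> cmod (gbar g s) <= gamma) /\
      (forall s : R[i], 0 < complex.Re s ->
         return_diff g f L s \in unitmx /\ spec_norm (Tcl g f L s) <= gamma).
Proof.
move=> n_ge2 _ _ [eps eps_gt0 osp_g] pr_f.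
exists eps^-1; first by rewrite invr_gt0.
have osp_at s (Res_gt0 : 0 < Re s) i :
    eps * cmod (tf_eval (g i) s) ^+ 2 <= Re (tf_eval (g i) s).
  by have [] := osp_g i s Res_gt0.
move=> L psdL; split=> s Res_gt0.
  by apply: cmod_gbar_le (osp_at s Res_gt0); [apply: ltnW |].
have [_ pr_fs] := pr_f s Res_gt0.
split; first exact: return_diff_unitmx psdL eps_gt0 (osp_at s Res_gt0) pr_fs.
exact: spec_norm_Tcl_le psdL eps_gt0 (osp_at s Res_gt0) pr_fs.
Qed.
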